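(* Let $N$ be a lattice, $M=\operatorname{Hom}(N,\mathbb{Z})$, $\sigma\subset N_{\mathbb{R}}$ a full-dimensional strongly convex rational polyhedral cone with primitive generators $\vec v_1,\dots,\vec v_r$, and let $a_1,\dots,a_r\ge0$ be rational numbers (the coefficients of an effective torus-invariant $\mathbb{Q}$-divisor $D=\sum a_iD_i$). Let $$P'=\{\vec v\in M_{\mathbb{R}}:\ \vec v\cdot\vec v_i\ge0\ \forall i,\text{ and for every }\vec k\in M\setminus\sigma^\vee\text{ there is }i\text{ with }(\vec v+\vec k)\cdot\vec v_i<-a_i\}.$$ Then $P'=P_\sigma^D:=\{\vec v\in M_{\mathbb{R}}:0\le\vec v\cdot\vec v_i<1-a_i\ \forall i\}$.
   Context: $\sigma^\vee=\{\vec u\in M_{\mathbb{R}}:\vec u\cdot\vec v\ge0\ \forall\vec v\in\sigma\}$. *)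

From HB Require Import structures.
From mathcomp Require Import all_boot all_order all_algebra.
From mathcomp Require Import reals.
Set Implicit Arguments. Unset Strict Implicit. Unset Printing Implicit Defensive.
Import Order.TTheory GRing.Theory Num.Theory.
Local Open Scope ring_scope.

(* N = Z^n, M = Hom(N,Z) = Z^n via the standard dot-product pairing;
   N_R = M_R = R^n, represented as row vectors. *)

Definition dot (R : nzRingType) (n : nat) (u v : 'rV[R]_n) : R :=
  \sum_(j < n) u 0 j * v 0 j.

Definition realize (R : nzRingType) (n : nat) (w : 'rV[int]_n) : 'rV[R]_n :=
  map_mx (fun z : int => z%:~R) w.

Definition primitive (n : nat) (w : 'rV[int]_n) : Prop :=
  forall d : int, (forall j, (d %| w ord0 j)%Z) -> d = 1 \/ d = -1.

Definition cone (R : realFieldType) (n r : nat) (v : 'I_r -> 'rV[R]_n)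
  (x : 'rV[R]_n) : Prop :=
  exists lam : 'I_r -> R, (forall i, 0 <= lam i) /\ x = \sum_(i < r) lam i *: v i.

Definition dual_cone (R : realFieldType) (n : nat) (S : 'rV[R]_n -> Prop)
  (u : 'rV[R]_n) : Prop :=
  forall w, S w -> 0 <= dot u w.

Definition strongly_convex (R : realFieldType) (n : nat) (S : 'rV[R]_n -> Prop)
  : Prop := forall x, S x -> S (- x) -> x = 0.

Definition full_dimensional (R : realFieldType) (n : nat) (S : 'rV[R]_n -> Prop)
  : Prop := forall x, exists y z, S y /\ S z /\ x = y - z.

(* the v_i are an irredundant generating family: no v_i lies in the cone
   generated by the others (so, for a strongly convex cone, they span
   pairwise distinct extremal rays) *)
Definition irredundant (R : realFieldType) (n r : nat) (v : 'I_r -> 'rV[R]_n)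
  : Prop :=
  forall i (lam : 'I_r -> R), (forall j, 0 <= lam j) -> lam i = 0 ->
    v i <> \sum_(j < r) lam j *: v j.

(* If [x . v_i >= 1 - a_i] for some [i], it suffices to find a lattice point [k] with
   [k . v_i = -1] and [k . v_l >= 0] for [l <> i]: then [k] is not in the dual cone,
   yet [(x + k) . v_l >= -a_l] for every [l].  Strong convexity and irredundancy make
   the ray of [v_i] a face of the cone, so Farkas' lemma gives a rational functional
   vanishing on [v_i] and positive on the other generators; made integral, a large
   multiple of it corrects any [k0] with [k0 . v_i = -1], which exists because [v_i]
   is primitive.  Conversely, [k] outside the dual cone has [k . v_i <= -1] for some
   [i], so [(x + k) . v_i < -a_i] whenever [x . v_i < 1 - a_i]. *)
From HB Require Import structures.
From mathcomp Require Import all_boot all_order all_algebra.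
From mathcomp Require Import reals ring lra.
Import Order.TTheory GRing.Theory Num.Theory.
Local Open Scope ring_scope.

Section Dot.
Context {F : comNzRingType} {n : nat}.
Implicit Types (u v w : 'rV[F]_n).

Lemma dotC u v : dot u v = dot v u.
Proof. by apply: eq_bigr => j _; rewrite mulrC. Qed.

Lemma dotDl u v w : dot (u + v) w = dot u w + dot v w.
Proof. by rewrite /dot -big_split; apply: eq_bigr => j _; rewrite mxE mulrDl. Qed.

Lemma dotZl a u w : dot (a *: u) w = a * dot u w.
Proof. by rewrite /dot mulr_sumr; apply: eq_bigr => j _; rewrite mxE mulrA. Qed.

Lemma dotNl u w : dot (- u) w = - dot u w.
Proof. by rewrite -scaleN1r dotZl mulN1r. Qed.

Lemma dotBl u v w : dot (u - v) w = dot u w - dot v w.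
Proof. by rewrite dotDl dotNl. Qed.

Lemma dot0l w : dot 0 w = 0.
Proof. by rewrite -(scale0r 0) dotZl mul0r. Qed.

Lemma dotDr u v w : dot w (u + v) = dot w u + dot w v.
Proof. by rewrite !(dotC w) dotDl. Qed.

Lemma dotZr a u w : dot w (a *: u) = a * dot w u.
Proof. by rewrite !(dotC w) dotZl. Qed.

Lemma dotNr u w : dot w (- u) = - dot w u.
Proof. by rewrite !(dotC w) dotNl. Qed.

Lemma dotBr u v w : dot w (u - v) = dot w u - dot w v.
Proof. by rewrite !(dotC w) dotBl. Qed.

Lemma dot0r w : dot w 0 = 0.
Proof. by rewrite dotC dot0l. Qed.

Lemma dot_sumr r u (c : 'I_r -> F) (g : 'I_r -> 'rV[F]_n) :
  dot u (\sum_l c l *: g l) = \sum_l c l * dot u (g l).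
Proof.
rewrite /dot; under eq_bigr do rewrite summxE mulr_sumr.
rewrite exchange_big /=; apply: eq_bigr => l _; rewrite mulr_sumr.
by apply: eq_bigr => j _; rewrite mxE mulrCA.
Qed.

End Dot.

Lemma dot_realize (F : numDomainType) (n : nat) (k w : 'rV[int]_n) :
  dot (realize F k) (realize F w) = (dot k w)%:~R.
Proof. by rewrite /dot rmorph_sum; apply: eq_bigr => j _; rewrite !mxE rmorphM. Qed.

Lemma dot_self_gt0 (F : realDomainType) (n : nat) (b : 'rV[F]_n) :
  b != 0 -> 0 < dot b b.
Proof.
have sq_ge0 j : 0 <= b 0 j * b 0 j by rewrite -expr2 sqr_ge0.
move=> b_neq0; rewrite lt_def sumr_ge0 ?andbT //.
apply: contra b_neq0 => /eqP /psumr_eq0P bb0; apply/eqP/rowP => j.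
by have /eqP := bb0 (fun j _ => sq_ge0 j) j isT; rewrite mxE mulf_eq0 orbb => /eqP.
Qed.

Section Farkas.
Context {F : realFieldType} {n : nat}.
Implicit Types (s t : seq 'rV[F]_n) (b u w y : 'rV[F]_n).

Fixpoint in_cone_seq s b : Prop :=
  if s is u :: t then exists2 mu, 0 <= mu & in_cone_seq t (b - mu *: u)
  else b = 0.

Lemma in_cone_seq_cons u t b : in_cone_seq t b -> in_cone_seq (u :: t) b.
Proof. by exists 0; rewrite ?scale0r ?subr0. Qed.

Section Projection.
Variables (y u : 'rV[F]_n) (c : F).

Let proj w := w - (dot y w / c) *: u.

Lemma in_cone_seq_proj t z :
  (forall w, w \in t -> 0 <= dot y w) -> in_cone_seq (map proj t) z ->
  exists z0, [/\ in_cone_seq t z0, 0 <= dot y z0 & z = proj z0].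
Proof.
elim: t z => [|w t IH] z /= y_ge0.
  by move->; exists 0; rewrite /proj dot0r mul0r scale0r subr0 lexx.
case=> mu mu_ge0 /IH [w' t_w' | z1 [z1_in yz1_ge0 z1E]].
  by apply: y_ge0; rewrite inE t_w' orbT.
have yw_ge0 : 0 <= dot y w by apply: y_ge0; rewrite mem_head.
exists (z1 + mu *: w); split.
- by exists mu; rewrite ?addrK.
- by rewrite dotDr dotZr addr_ge0 ?mulr_ge0.
- rewrite -[z](subrK (mu *: proj w)) z1E /proj dotDr dotZr.
  by apply/rowP => k; rewrite !mxE; ring.
Qed.

End Projection.

(* Induction on [s]: when the functional [y] separating [b] from the cone of [t] is
   negative on [u], project everything along [u] onto the kernel of [y] and separate
   again. *)
Lemma farkas s b :
  ~ in_cone_seq s b -> exists y, (forall w, w \in s -> 0 <= dot y w) /\ dot y b < 0.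
Proof.
have [m] := ubnP (size s); elim: m s b => // m IH [|u t] b /= size_lt b_notin.
  exists (- b); split=> //; rewrite dotNl oppr_lt0 dot_self_gt0 //.
  by apply/eqP.
have [|y [y_ge0 yb_lt0]] := IH t b size_lt.
  exact: contra_not (@in_cone_seq_cons u t b) b_notin.
have [yu_ge0|yu_lt0] := lerP 0 (dot y u).
  by exists y; split=> // w; rewrite inE => /predU1P [->|/y_ge0].
set c := dot y u in yu_lt0; have c_neq0 : c != 0 by rewrite lt_eqF.
pose proj w := w - (dot y w / c) *: u.
have size_proj : (size (map proj t) < m)%N by rewrite size_map.
have [|z [z_ge0 zb_lt0]] := IH _ (proj b) size_proj.
  move=> /(in_cone_seq_proj y u c t _ y_ge0) [z0 [z0_in yz0_ge0 projE]]; apply: b_notin.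
  exists ((dot y b - dot y z0) / c).
    by rewrite -mulrNN -invrN mulr_ge0 ?invr_ge0; lra.
  congr in_cone_seq: z0_in; apply/rowP => k; move/rowP/(_ k): projE.
  rewrite !mxE => projE; rewrite -[z0 0 k](subrK (dot y z0 / c * u 0 k)) -projE.
  by field.
have projT w : dot (z - (dot z u / c) *: y) w = dot z (proj w).
  by rewrite /proj dotBl dotBr !dotZl !dotZr (dotC y w); field.
exists (z - (dot z u / c) *: y); split; last by rewrite projT.
move=> w; rewrite inE => /predU1P [->|t_w].
  by rewrite dotBl dotZl -/c divfK // subrr.
by rewrite projT z_ge0 // map_f.
Qed.

End Farkas.

Lemma sum_scale_delta (F : nzRingType) (n r : nat) (g : 'I_r -> 'rV[F]_n) j (c : F) :
  \sum_l ((l == j)%:R * c) *: g l = c *: g j.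
Proof.
rewrite (bigD1 j) //= eqxx mul1r big1 ?addr0 // => l /negbTE->.
by rewrite mul0r scale0r.
Qed.

Section ConeGenerators.
Context {F : realFieldType} {n r : nat} {g : 'I_r -> 'rV[F]_n}.

Lemma cone_gen i : cone g (g i).
Proof.
exists (fun l => (l == i)%:R * 1); split; first by move=> l; rewrite mulr1 ler0n.
by rewrite sum_scale_delta scale1r.
Qed.

Lemma dual_cone_gens u : (forall i, 0 <= dot u (g i)) -> dual_cone (cone g) u.
Proof.
by move=> u_ge0 _ [lam [lam_ge0 ->]]; rewrite dot_sumr sumr_ge0 // => l _; rewrite mulr_ge0.
Qed.

Lemma irredundant_neq0 i : irredundant g -> g i != 0.
Proof.
move=> irr; apply/eqP => gi0; apply: (irr i (fun=> 0)) => //.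
by rewrite gi0 big1 // => l _; rewrite scale0r.
Qed.

Lemma in_cone_seq_gens (s : seq 'I_r) b : in_cone_seq (map g s) b ->
  exists lam : 'I_r -> F, [/\ forall l, 0 <= lam l, forall l, l \notin s -> lam l = 0
                            & b = \sum_l lam l *: g l].
Proof.
elim: s b => [|l0 s IH] b /=.
  by move->; exists (fun=> 0); split=> //; rewrite big1 // => l _; rewrite scale0r.
case=> mu mu_ge0 /IH [lam [lam_ge0 lam_out bE]].
exists (fun l => lam l + (l == l0)%:R * mu); split.
- by move=> l; rewrite addr_ge0 // mulr_ge0 // ler0n.
- by move=> l; rewrite inE negb_or => /andP [/negbTE-> /lam_out->]; rewrite mul0r addr0.
- under eq_bigr do rewrite scalerDl.
  by rewrite big_split /= -bE sum_scale_delta subrK.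
Qed.

Definition gens_with_line j := g j :: - g j :: map g [seq l <- enum 'I_r | l != j].

Lemma in_cone_seq_line_gens j b : in_cone_seq (gens_with_line j) b ->
  exists lam : 'I_r -> F, exists ga,
    [/\ forall l, 0 <= lam l, lam j = 0 & b = \sum_l lam l *: g l + ga *: g j].
Proof.
case=> al _ [be _ /in_cone_seq_gens [lam [lam_ge0 lam_out bE]]].
exists lam, (al - be); split=> //; first by rewrite lam_out // mem_filter eqxx.
by rewrite -bE; apply/rowP => k; rewrite !mxE; ring.
Qed.

Hypotheses (sc : strongly_convex (cone g)) (irr : irredundant g).

(* Otherwise either [- g i] lies in the cone, against strong convexity, or [g j] is
   a nonnegative combination of the other generators, against irredundancy. *)
Lemma opp_gen_notin_line_cone {i j} : i != j -> ~ in_cone_seq (gens_with_line j) (- g i).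
Proof.
move=> ij /in_cone_seq_line_gens [lam [ga [lam_ge0 lamj giE]]].
have [ga_ge0|ga_lt0] := lerP 0 ga.
  have : cone g (- g i).
    exists (fun l => lam l + (l == j)%:R * ga); split.
      by move=> l; rewrite addr_ge0 // mulr_ge0 // ler0n.
    by under eq_bigr do rewrite scalerDl; rewrite big_split /= sum_scale_delta.
  by move/(sc _ (cone_gen i))/eqP; rewrite (negbTE (irredundant_neq0 i irr)).
pose mu l := (lam l + (l == i)%:R * 1) / - ga.
apply: (irr j mu).
- by move=> l; rewrite divr_ge0 ?addr_ge0 ?mulr_ge0 ?ler0n //; lra.
- by rewrite /mu lamj eq_sym (negbTE ij) mul0r add0r mul0r.
- have ga_neq0 : ga != 0 by rewrite lt_eqF.
  under eq_bigr do rewrite /mu mulrC -scalerA scalerDl.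
  rewrite -scaler_sumr big_split /= sum_scale_delta.
  have -> : \sum_l lam l *: g l = - g i - ga *: g j by rewrite giE addrK.
  by apply/rowP => k; rewrite !mxE; field.
Qed.

Lemma separating_functional {i j} : i != j ->
  exists y, [/\ dot y (g j) = 0, forall l, 0 <= dot y (g l) & 0 < dot y (g i)].
Proof.
move=> ij; have [y [y_ge0 ygi_lt0]] := farkas _ _ (opp_gen_notin_line_cone ij).
have ygj_ge0 : 0 <= dot y (g j) by rewrite y_ge0 ?mem_head.
have := y_ge0 (- g j); rewrite dotNr oppr_ge0 !inE eqxx orbT => /(_ isT) ygj_le0.
exists y; split; first exact/le_anti/andP.
- move=> l; have [->|lj] := eqVneq l j; first exact: ygj_ge0.
  by rewrite y_ge0 // !inE map_f ?orbT // mem_filter lj mem_enum.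
- by rewrite -oppr_lt0 -dotNr.
Qed.

Lemma face_functional j :
  exists y, dot y (g j) = 0 /\ forall l, l != j -> 0 < dot y (g l).
Proof.
suff /(_ [seq l <- enum 'I_r | l != j]) [|y [yj _ y_gt0]] : forall L : seq 'I_r, j \notin L ->
    exists y, [/\ dot y (g j) = 0, forall l, 0 <= dot y (g l)
                & forall l, l \in L -> 0 < dot y (g l)].
- by rewrite mem_filter eqxx.
- by exists y; split=> // l lj; rewrite y_gt0 // mem_filter lj mem_enum.
elim=> [_|i L IH]; first by exists 0; rewrite dot0l; split=> // l; rewrite dot0l.
rewrite inE negb_or eq_sym => /andP [ij /IH [y [yj y_ge0 y_gt0]]].
have [z [zj z_ge0 zi_gt0]] := separating_functional ij.
exists (y + z); split=> [|l|l]; rewrite !dotDl ?yj ?zj ?addr0 ?addr_ge0 //.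
rewrite inE => /predU1P [->|/y_gt0 yl_gt0]; first by rewrite ltr_wpDl.
by rewrite ltr_wpDr.
Qed.

End ConeGenerators.

(* Farkas is applied over [rat] so that the resulting functionals can be made integral. *)
Section RationalGenerators.
Context {R : realFieldType} {n r : nat} {v : 'I_r -> 'rV[int]_n}.

Lemma map_realize_ratr (w : 'rV[int]_n) : map_mx ratr (realize rat w) = realize R w.
Proof. by apply/rowP => k; rewrite !mxE ratr_int. Qed.

Lemma map_ratr_lincomb (c : 'I_r -> rat) :
  map_mx ratr (\sum_l c l *: realize rat (v l)) = \sum_l ratr (c l) *: realize R (v l).
Proof.
apply/rowP => k; rewrite !mxE !summxE rmorph_sum; apply: eq_bigr => l _.
by rewrite !mxE rmorphM rmorph_int.
Qed.

Lemma cone_map_ratr x : cone (fun i => realize rat (v i)) x ->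
  cone (fun i => realize R (v i)) (map_mx ratr x).
Proof.
case=> lam [lam_ge0 ->]; exists (fun l => ratr (lam l)).
by split=> [l|]; [rewrite ler0q | exact: map_ratr_lincomb].
Qed.

Lemma strongly_convex_rat : strongly_convex (cone (fun i => realize R (v i))) ->
  strongly_convex (cone (fun i => realize rat (v i))).
Proof.
move=> sc x /cone_map_ratr cx /cone_map_ratr; rewrite map_mxN => cNx.
by apply: (@map_mx_inj _ _ (ratr : {rmorphism rat -> R})); rewrite (sc _ cx cNx) map_mx0.
Qed.

Lemma irredundant_rat : irredundant (fun i => realize R (v i)) ->
  irredundant (fun i => realize rat (v i)).
Proof.
move=> irr i lam lam_ge0 lami vE; apply: (irr i (fun l => ratr (lam l))).
- by move=> l; rewrite ler0q.
- by rewrite lami rmorph0.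
- by rewrite -map_ratr_lincomb -vE map_realize_ratr.
Qed.

End RationalGenerators.

Lemma lincomb_common_divisor {n : nat} (f : 'I_n -> int) :
  exists c : 'I_n -> int, forall j, (\sum_l c l * f l %| f j)%Z.
Proof.
elim: n f => [|n IH] f; first by exists (fun=> 0) => -[].
have [c' c'_dvd] := IH (fun l => f (lift ord0 l)).
set g' := \sum_l _ in c'_dvd.
have [u [w uwE]] := Bezoutz (f ord0) g'.
exists (fun l => if unlift ord0 l is Some l' then w * c' l' else u).
rewrite big_ord_recl unlift_none.
under eq_bigr do rewrite liftK -mulrA.
rewrite -mulr_sumr -/g' uwE => j; case: (unliftP ord0 j) => [j'|] ->.
  exact: dvdz_trans (dvdz_gcdr _ _) (c'_dvd j').
exact: dvdz_gcdl.
Qed.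

Lemma primitive_dot_eqN1 {n : nat} (w : 'rV[int]_n) :
  primitive w -> exists k : 'rV[int]_n, dot k w = -1.
Proof.
have [c c_dvd] := lincomb_common_divisor (w ord0).
set g := \sum_l _ in c_dvd; move=> /(_ g c_dvd) g_unit.
have gg : g * g = 1 by case: g_unit => ->.
exists (\row_l (- g * c l)); rewrite /dot.
by under eq_bigr do rewrite mxE -mulrA; rewrite -mulr_sumr mulNr gg.
Qed.

Lemma clear_denominators {n : nat} (Y : 'rV[rat]_n) :
  exists W : 'rV[int]_n, exists2 D : rat, 0 < D & realize rat W = D *: Y.
Proof.
exists (\row_j (numq (Y 0 j) * \prod_(l | l != j) denq (Y 0 l))).
exists (\prod_l denq (Y 0 l))%:~R; first by rewrite ltr0z prodr_gt0 // => l _.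
by apply/rowP => j; rewrite !mxE [in RHS](bigD1 j) //= !intrM numqE; ring.
Qed.

Section LatticeGenerators.
Context {n r : nat} {v : 'I_r -> 'rV[int]_n}.
Hypotheses (sc : strongly_convex (cone (fun i => realize rat (v i))))
           (irr : irredundant (fun i => realize rat (v i))).

Lemma integral_face_functional j :
  exists W : 'rV[int]_n, dot W (v j) = 0 /\ forall l, l != j -> 0 < dot W (v l).
Proof.
have [Y [Yj Y_gt0]] := face_functional sc irr j.
have [W [D D_gt0 WE]] := clear_denominators Y.
have WvE l : (dot W (v l))%:~R = D * dot Y (realize rat (v l)) :> rat.
  by rewrite -dot_realize WE dotZl.
exists W; split=> [|l lj]; first by apply/eqP; rewrite -(intr_eq0 rat) WvE Yj mulr0.
by rewrite -(ltr0z rat) WvE pmulr_rgt0 ?Y_gt0.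
Qed.

Lemma lattice_functional j : primitive (v j) ->
  exists k : 'rV[int]_n, dot k (v j) = -1 /\ forall l, l != j -> 0 <= dot k (v l).
Proof.
move=> /primitive_dot_eqN1 [k0 k0j]; have [W [Wj W_gt0]] := integral_face_functional j.
pose N := \sum_l `|dot k0 (v l)|.
exists (k0 + N *: W); split=> [|l lj]; first by rewrite dotDl dotZl Wj mulr0 addr0.
have N_ge : `|dot k0 (v l)| <= N by rewrite /N (bigD1 l) //= lerDl sumr_ge0.
have NW_ge : N <= N * dot W (v l) by rewrite ler_peMr ?sumr_ge0 // -gtz0_ge1 W_gt0.
have := ler_norm (- dot k0 (v l)); rewrite normrN dotDl dotZl; lra.
Qed.

End LatticeGenerators.

Theorem lemma4p20 (R : realType) (n r : nat) (v : 'I_r -> 'rV[int]_n)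
  (a : 'I_r -> rat) :
  strongly_convex (cone (fun i => realize R (v i))) ->
  full_dimensional (cone (fun i => realize R (v i))) ->
  (forall i, primitive (v i)) ->
  irredundant (fun i => realize R (v i)) ->
  (forall i, 0 <= a i) ->
  forall x : 'rV[R]_n,
    ((forall i, 0 <= dot x (realize R (v i))) /\
     (forall k : 'rV[int]_n,
        ~ dual_cone (cone (fun i => realize R (v i))) (realize R k) ->
        exists i, dot (x + realize R k) (realize R (v i)) < - ratr (a i)))
    <->
    (forall i, 0 <= dot x (realize R (v i)) < 1 - ratr (a i)).
Proof.
move=> sc _ prim irr a_ge0 x; split=> [[x_ge0 x_sep] i | x_in].
  rewrite x_ge0 ltNge; apply/negP => xi_ge.
  have [k [ki kl_ge0]] :=
    lattice_functional (strongly_convex_rat sc) (irredundant_rat irr) i (prim i).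
  have [|l] := x_sep k.
    by move/(_ _ (cone_gen i)); rewrite dot_realize ki ler0z.
  rewrite dotDl dot_realize; have [->|li] := eqVneq l i; first by rewrite ki; lra.
  have : 0 <= (dot k (v l))%:~R :> R by rewrite ler0z kl_ge0.
  have : 0 <= ratr (a l) :> R by rewrite ler0q.
  have := x_ge0 l; lra.
split=> [i | k k_notin]; first by case/andP: (x_in i).
have /existsP [i ki_lt0] : [exists i, dot k (v i) < 0].
  apply: contra_notT k_notin => /existsPn k_ge0; apply: dual_cone_gens => i.
  by rewrite dot_realize ler0z leNgt k_ge0.
have : (dot k (v i))%:~R <= -1 :> R by rewrite -(intrN _ 1) ler_int.
exists i; rewrite dotDl dot_realize; have := x_in i; lra.
Qed.
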